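(* Let $n_0,n_1,n_\infty$ be integers with $1\le n_0\le n_1\le n_\infty$ and $n=n_0+n_1+n_\infty$, and let $\overline{\mathcal{S}}=\{[\xi:\eta:\zeta]\in\mathbb{CP}^2 : \zeta^{n-n_0-n_1}\eta^n-\xi^{n-n_0}(\zeta-\xi)^{n-n_1}=0\}$. Then the singular points of $\overline{\mathcal{S}}$ are $[0:0:1]$, $[1:0:1]$, and, if $n_\infty>1$, also $[0:1:0]$. *)

From HB Require Import structures.
From mathcomp Require Import all_boot all_order all_algebra.
From mathcomp Require Import complex reals.
From mathcomp Require Import mpoly.
Set Implicit Arguments. Unset Strict Implicit. Unset Printing Implicit Defensive.
Import Order.TTheory GRing.Theory Num.Theory.
Local Open Scope ring_scope.

Definition xi_ : 'I_3 := @Ordinal 3 0 isT.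
Definition eta_ : 'I_3 := @Ordinal 3 1 isT.
Definition zeta_ : 'I_3 := @Ordinal 3 2 isT.

Definition Spoly (K : ringType) (n0 n1 ninf : nat) : {mpoly K[3]} :=
  let n := (n0 + n1 + ninf)%N in
  'X_zeta_ ^+ (n - n0 - n1) * 'X_eta_ ^+ n
  - 'X_xi_ ^+ (n - n0) * ('X_zeta_ - 'X_xi_) ^+ (n - n1).

Definition singular_point (K : ringType) (F : {mpoly K[3]}) (v : 'I_3 -> K) : Prop :=
  (exists i, v i != 0) /\ F.@[v] = 0 /\ forall i : 'I_3, (mderiv i F).@[v] = 0.

Definition proj_eq (K : ringType) (v w : 'I_3 -> K) : Prop :=
  exists c : K, c != 0 /\ forall i, v i = c * w i.

Definition pt3 (K : ringType) (a b c : K) : 'I_3 -> K :=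
  fun i => if i == xi_ then a else if i == eta_ then b else c.

From HB Require Import structures.
From mathcomp Require Import all_boot all_order all_algebra.
From mathcomp Require Import complex reals.
From mathcomp Require Import mpoly ring zify.
Import Order.TTheory GRing.Theory Num.Theory.
Local Open Scope ring_scope.

(* Write F = z^a y^m - x^b (z - x)^c with a = n_inf, m = n, b = n - n0, c = n - n1.
   Since dF/deta = m z^a y^(m-1), a singular point has y = 0 or z = 0.  If y = 0,
   F = 0 forces x = 0 or x = z.  If z = 0 and y <> 0, F = 0 forces x = 0, and then
   dF/dzeta = a z^(a-1) y^m vanishes only when a > 1.  Conversely, as m, b, c >= 2,
   every partial derivative vanishes at [0:0:1] and [1:0:1], and also at [0:1:0]
   when a >= 2. *)

Section PartialDerivatives.
Variables (K : comNzRingType) (n : nat).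
Implicit Types (i j : 'I_n) (p : {mpoly K[n]}).

Lemma mderivXU i j : ('X_j : {mpoly K[n]})^`M(i) = (j == i)%:R%:MP.
Proof.
rewrite mderivX mnm1E; case: eqP => [->|_]; last by rewrite scale0r mpolyC0.
have -> : (U_(i) - U_(i))%MM = 0%MM by apply/mnmP => k; rewrite !mnmE subnn.
by rewrite mpolyX0 scale1r mpolyC1.
Qed.

Lemma mderiv_exp i p k : (p ^+ k)^`M(i) = p^`M(i) * p ^+ k.-1 *+ k.
Proof.
elim: k => [|k IH]; first by rewrite expr0 -mpolyC1 mderivC mulr0n.
by rewrite exprS mderivM IH; case: k {IH} => [|k] /=; rewrite ?expr0 ?exprS; ring.
Qed.

End PartialDerivatives.

Definition singular_at {K : nzRingType} (F : {mpoly K[3]}) (v : 'I_3 -> K) : Prop :=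
  F.@[v] = 0 /\ forall i : 'I_3, (F^`M(i)).@[v] = 0.

Lemma ord3P (i : 'I_3) : [\/ i = xi_, i = eta_ | i = zeta_].
Proof.
by case: i => -[|[|[|//]]] lt_i3; [constructor 1 | constructor 2 | constructor 3]; apply: val_inj.
Qed.

Lemma forall_ord3 (P : 'I_3 -> Prop) : (forall i, P i) <-> [/\ P xi_, P eta_ & P zeta_].
Proof. by split=> [//|[Px Py Pz] i]; case: (ord3P i) => ->. Qed.

Lemma exists_ord3 (P : 'I_3 -> Prop) : (exists i, P i) <-> [\/ P xi_, P eta_ | P zeta_].
Proof.
split=> [[i Pi] | [Pi|Pi|Pi]]; [|by exists xi_|by exists eta_|by exists zeta_].
by case: (ord3P i) Pi => ->; [constructor 1 | constructor 2 | constructor 3].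
Qed.

Lemma proj_eq_pt3 (K : nzRingType) (v : 'I_3 -> K) a b c :
  proj_eq v (pt3 a b c) <->
  exists2 k, k != 0 & [/\ v xi_ = k * a, v eta_ = k * b & v zeta_ = k * c].
Proof.
rewrite /proj_eq; split=> [[k [k0 /forall_ord3 []]] | [k k0 vk]]; first by exists k.
by exists k; split => //; apply/forall_ord3.
Qed.

Section CurvePoly.
Variables (K : comNzRingType) (a m b c : nat).

Definition curve_poly : {mpoly K[3]} :=
  'X_zeta_ ^+ a * 'X_eta_ ^+ m - 'X_xi_ ^+ b * ('X_zeta_ - 'X_xi_) ^+ c.

Variable v : 'I_3 -> K.
Local Notation x := (v xi_).
Local Notation y := (v eta_).
Local Notation z := (v zeta_).

Lemma meval_curve : curve_poly.@[v] = z ^+ a * y ^+ m - x ^+ b * (z - x) ^+ c.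
Proof. by rewrite mevalB !mevalM !rmorphXn /= mevalB !mevalXU. Qed.

Lemma meval_mderiv_curve i : (curve_poly^`M(i)).@[v] =
  (zeta_ == i)%:R * z ^+ a.-1 *+ a * y ^+ m + z ^+ a * ((eta_ == i)%:R * y ^+ m.-1 *+ m)
  - ((xi_ == i)%:R * x ^+ b.-1 *+ b * (z - x) ^+ c
     + x ^+ b * (((zeta_ == i)%:R - (xi_ == i)%:R) * (z - x) ^+ c.-1 *+ c)).
Proof.
rewrite mderivB !mderivM !mderiv_exp mderivB !mderivXU.
by rewrite !(mevalB, mevalD, mevalM, mevalMn, rmorphXn, mevalXU, mevalC) /= ?mevalB ?mevalXU.
Qed.

Lemma meval_curve_dxi : (curve_poly^`M(xi_)).@[v] =
  x ^+ b * (z - x) ^+ c.-1 *+ c - x ^+ b.-1 * (z - x) ^+ c *+ b.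
Proof. rewrite meval_mderiv_curve /=; ring. Qed.

Lemma meval_curve_deta : (curve_poly^`M(eta_)).@[v] = z ^+ a * y ^+ m.-1 *+ m.
Proof. rewrite meval_mderiv_curve /=; ring. Qed.

Lemma meval_curve_dzeta : (curve_poly^`M(zeta_)).@[v] =
  z ^+ a.-1 * y ^+ m *+ a - x ^+ b * (z - x) ^+ c.-1 *+ c.
Proof. rewrite meval_mderiv_curve /=; ring. Qed.

Lemma singular_at_curve_eta0 (hm : (1 < m)%N) (hb : (1 < b)%N) (hc : (1 < c)%N) :
  y = 0 -> x = 0 \/ x = z -> singular_at curve_poly v.
Proof.
move=> y0 x0z; split; last apply/forall_ord3;
  rewrite ?meval_curve_dxi ?meval_curve_deta ?meval_curve_dzeta ?meval_curve y0;
  case: m b c hm hb hc => [|[|m']] // [|[|b']] // [|[|c']] // _ _ _ /=;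
  case: x0z => ->; rewrite ?subrr !expr0n /=; try split; ring.
Qed.

Lemma singular_at_curve_xi0_zeta0 (ha : (1 < a)%N) (hb : (1 < b)%N) :
  x = 0 -> z = 0 -> singular_at curve_poly v.
Proof.
move=> x0 z0; split; last apply/forall_ord3;
  rewrite ?meval_curve_dxi ?meval_curve_deta ?meval_curve_dzeta ?meval_curve x0 z0 subrr;
  case: a b ha hb => [|[|a']] // [|[|b']] // _ _ /=;
  rewrite !expr0n /=; try split; ring.
Qed.

End CurvePoly.

Section CharacteristicZero.
Variables (K : idomainType) (a m b c : nat) (v : 'I_3 -> K).
Hypothesis K_char0 : [pchar K] =i pred0.
Local Notation x := (v xi_).
Local Notation y := (v eta_).
Local Notation z := (v zeta_).

Lemma pchar0_mulrn_eq0 (t : K) k : (t *+ k == 0) = (k == 0)%N || (t == 0).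
Proof. by rewrite -mulr_natr mulf_eq0 (pcharf0P _).1 // orbC. Qed.

Lemma singular_at_curve_cases
    (ha : (0 < a)%N) (hm : (0 < m)%N) (hb : (0 < b)%N) (hc : (0 < c)%N) :
  singular_at (curve_poly K a m b c) v ->
  y = 0 /\ (x = 0 \/ x = z) \/ [/\ (1 < a)%N, x = 0 & z = 0].
Proof.
move=> [F0 /forall_ord3 [_ /eqP Dy /eqP Dz]].
rewrite meval_curve in F0; rewrite meval_curve_deta in Dy; rewrite meval_curve_dzeta in Dz.
have [y0|y_neq0] := eqVneq y 0.
  left; split=> //; move/eqP: F0.
  rewrite y0 expr0n eqn0Ngt hm mulr0 sub0r oppr_eq0 mulf_eq0 !expf_eq0 hb hc subr_eq0.
  by case/orP=> /eqP; [left | right].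
have z0 : z = 0.
  apply/eqP; move: Dy.
  by rewrite pchar0_mulrn_eq0 eqn0Ngt hm mulf_eq0 !expf_eq0 (negPf y_neq0) ha andbF orbF.
have x0 : x = 0.
  apply/eqP; move/eqP: F0; rewrite z0 expr0n eqn0Ngt ha mul0r !sub0r oppr_eq0.
  by rewrite mulf_eq0 !expf_eq0 oppr_eq0 hb hc orbb.
right; split=> //; move: Dz.
rewrite x0 z0 [0 ^+ b]expr0n eqn0Ngt hb mul0r mul0rn subr0.
rewrite pchar0_mulrn_eq0 eqn0Ngt ha /= mulf_eq0 !expf_eq0 eqxx (negPf y_neq0) andbF andbT orbF.
by case: a ha => [|[|]].
Qed.

Lemma singular_point_curve
    (ha : (0 < a)%N) (hm : (1 < m)%N) (hb : (1 < b)%N) (hc : (1 < c)%N) :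
  singular_point (curve_poly K a m b c) v <->
  [/\ exists j, v j != 0 &
   proj_eq v (pt3 0 0 1) \/ proj_eq v (pt3 1 0 1) \/
   ((1 < a)%N /\ proj_eq v (pt3 0 1 0))].
Proof.
split=> -[nz sing]; split=> //.
  have := singular_at_curve_cases ha (ltnW hm) (ltnW hb) (ltnW hc) sing.
  case=> [[y0 [x0|xz]] | [a1 x0 z0]].
  - left; apply/proj_eq_pt3; exists z; last by rewrite x0 y0 !mulr0 mulr1.
    by case/exists_ord3: nz; rewrite ?x0 ?y0 ?eqxx.
  - right; left; apply/proj_eq_pt3; exists z; last by rewrite xz y0 mulr0 !mulr1.
    by case/exists_ord3: nz; rewrite ?xz ?y0 ?eqxx.
  - right; right; split=> //; apply/proj_eq_pt3; exists y; last by rewrite x0 z0 !mulr0 mulr1.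
    by case/exists_ord3: nz; rewrite ?x0 ?z0 ?eqxx.
case: sing => [|[|[a1]]] /proj_eq_pt3 [k _ [xk yk zk]].
- by apply: singular_at_curve_eta0; rewrite // ?yk ?mulr0 //; left; rewrite xk mulr0.
- by apply: singular_at_curve_eta0; rewrite // ?yk ?mulr0 //; right; rewrite xk zk.
- by apply: singular_at_curve_xi0_zeta0; rewrite // ?xk ?zk mulr0.
Qed.

End CharacteristicZero.

Lemma SpolyE (K : comNzRingType) n0 n1 ninf :
  Spoly K n0 n1 ninf = curve_poly K ninf (n0 + n1 + ninf) (n1 + ninf) (n0 + ninf).
Proof. by rewrite /Spoly /curve_poly -!addnA !addKn addnCA addKn. Qed.

Theorem corollary2 (R : realType) (n0 n1 ninf : nat)
    (h0 : (1 <= n0)%N) (h01 : (n0 <= n1)%N) (h1inf : (n1 <= ninf)%N)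
    (v : 'I_3 -> R[i]) :
  singular_point (Spoly (R[i]) n0 n1 ninf) v <->
  [/\ exists j, v j != 0 &
   proj_eq v (pt3 0 0 1) \/ proj_eq v (pt3 1 0 1) \/
   ((1 < ninf)%N /\ proj_eq v (pt3 0 1 0))].
Proof.
by rewrite SpolyE; apply: singular_point_curve; [exact: pchar_num | lia..].
Qed.
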